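(* Let $(V,\nu)$ be a gauged space. Then there exist a compact Hausdorff space $X$ and a linear map $\phi:V\to C_{\mathbb{R}}(X)$ such that $\nu(x)=d_{C_{\mathbb{R}}(X)}(\phi(x))$ for all $x\in V$. Consequently $\phi$ is isometric from $(V,\|\cdot\|_\nu)$ into $C_{\mathbb{R}}(X)$ with the supremum norm, and $\phi$ is an order embedding of $(V,V_{+,\nu})$ into $(C_{\mathbb{R}}(X),C_{\mathbb{R}}(X)_+)$.
   Context: $C_{\mathbb{R}}(X)$ denotes the continuous real-valued functions on $X$, with the supremum norm and cone $C_{\mathbb{R}}(X)_+$ of pointwise nonnegative functions. A gauge on a real vector space $V$ is a map $\nu:V\to[0,\infty)$ with $\nu(x+y)\le\nu(x)+\nu(y)$ and $\nu(tx)=t\nu(x)$ for all $x,y\in V$, $t>0$; its conjugate is $\overline{\nu}(x)=\nu(-x)$. A gauge is proper if for every $x\neq0$, $\nu(x)\neq0$ or $\overline{\nu}(x)\neq0$; a gauged space is a pair $(V,\nu)$ with $\nu$ a proper gauge. The induced norm is $\|x\|_\nu=\max\{\nu(x),\overline{\nu}(x)\}$ and the induced cone is $V_{+,\nu}=\ker\overline{\nu}$. For a normed ordered vector space $(W,\|\cdot\|,W_+)$, $d_W(y)=\inf\{\|y+p\|:p\in W_+\}$. An order embedding is an injective linear map $\phi$ with $\phi(x)\ge0$ iff $x\ge0$. *)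

From Stdlib Require Import Reals List.
Open Scope R_scope.

Record VecSpace : Type := {
  vcar :> Type;
  vadd : vcar -> vcar -> vcar;
  vzero : vcar;
  vopp : vcar -> vcar;
  vscal : R -> vcar -> vcar;
  vaddA : forall x y z, vadd x (vadd y z) = vadd (vadd x y) z;
  vaddC : forall x y, vadd x y = vadd y x;
  vadd0 : forall x, vadd x vzero = x;
  vaddN : forall x, vadd x (vopp x) = vzero;
  vscalA : forall a b x, vscal a (vscal b x) = vscal (a * b) x;
  vscal1 : forall x, vscal 1 x = x;
  vscalDr : forall a x y, vscal a (vadd x y) = vadd (vscal a x) (vscal a y);
  vscalDl : forall a b x, vscal (a + b) x = vadd (vscal a x) (vscal b x)
}.
Arguments vadd {v}. Arguments vzero {v}. Arguments vopp {v}. Arguments vscal {v}.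

Definition is_gauge (V : VecSpace) (nu : V -> R) : Prop :=
  (forall x, 0 <= nu x) /\
  (forall x y, nu (vadd x y) <= nu x + nu y) /\
  (forall (t : R) x, 0 < t -> nu (vscal t x) = t * nu x).

Definition conj_gauge (V : VecSpace) (nu : V -> R) : V -> R :=
  fun x => nu (vopp x).

Definition is_proper_gauge (V : VecSpace) (nu : V -> R) : Prop :=
  is_gauge V nu /\
  (forall x, x <> vzero -> nu x <> 0 \/ conj_gauge V nu x <> 0).

Definition gauge_norm (V : VecSpace) (nu : V -> R) (x : V) : R :=
  Rmax (nu x) (conj_gauge V nu x).

Definition gauge_cone (V : VecSpace) (nu : V -> R) (x : V) : Prop :=
  conj_gauge V nu x = 0.

Record TopSpace : Type := {
  tcar :> Type;
  is_open : (tcar -> Prop) -> Prop;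
  open_full : is_open (fun _ => True);
  open_union : forall (I : Type) (U : I -> tcar -> Prop),
      (forall i, is_open (U i)) -> is_open (fun x => exists i, U i x);
  open_inter : forall U W, is_open U -> is_open W -> is_open (fun x => U x /\ W x)
}.

Definition compact_space (X : TopSpace) : Prop :=
  forall (I : Type) (U : I -> X -> Prop),
    (forall i, is_open X (U i)) -> (forall x, exists i, U i x) ->
    exists l : list I, forall x, exists i, In i l /\ U i x.

Definition hausdorff (X : TopSpace) : Prop :=
  forall x y : X, x <> y ->
    exists U W, is_open X U /\ is_open X W /\ U x /\ W y /\
                (forall z, ~ (U z /\ W z)).

Definition continuous_fun (X : TopSpace) (f : X -> R) : Prop :=
  forall (x : X) (eps : R), 0 < eps ->
    exists U, is_open X U /\ U x /\ forall y, U y -> Rabs (f y - f x) < eps.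

(** Supremum norm on C_R(X) (as a relation: [r] is the sup norm of [f];
    the value 0 is included so that the empty space gets norm 0). *)
Definition is_supnorm (X : TopSpace) (f : X -> R) (r : R) : Prop :=
  is_lub (fun y => y = 0 \/ exists t : X, y = Rabs (f t)) r.

Definition is_glb (E : R -> Prop) (m : R) : Prop :=
  (forall y, E y -> m <= y) /\ (forall b, (forall y, E y -> b <= y) -> b <= m).

Definition is_dC (X : TopSpace) (g : X -> R) (d : R) : Prop :=
  is_glb (fun r => exists p : X -> R, continuous_fun X p /\ (forall t, 0 <= p t) /\
                     is_supnorm X (fun t => g t + p t) r) d.

Definition is_linear (V : VecSpace) (X : TopSpace) (phi : V -> X -> R) : Prop :=
  (forall x y t, phi (vadd x y) t = phi x t + phi y t) /\
  (forall a x t, phi (vscal a x) t = a * phi x t).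

From HB Require Import structures.
From Stdlib Require Import Reals List Lra Classical.
From mathcomp Require Import all_boot all_order ssralg.
From mathcomp Require Import boolp classical_sets topology normedtype Rstruct Rstruct_topology.
From mathcomp Require Import function_spaces finmap set_interval interval.
Open Scope R_scope.

(* X is the set of linear functionals f <= nu with the topology of pointwise
   convergence, and phi x is evaluation at x.  X is closed in the product of
   the compact intervals [-nu(-x), nu x], hence compact by Tychonoff.  By
   Hahn-Banach (Zorn's lemma on graphs of dominated partial functionals) the
   bound f x <= nu x is attained on X, so nu x = max phi x.  Adding to phi x
   its negative part gives its positive part, of norm nu x, while any positive
   perturbation still has norm >= nu x at the maximising f; so
   d(phi x) = nu x.  The norm identity, order embedding and injectivity (via
   properness) follow from -nu(-x) <= f x <= nu x with both bounds attained. *)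

Section VectorAlgebra.
Context {V : VecSpace}.
Implicit Types x y z w : V.

Lemma vadd0l x : vadd vzero x = x.
Proof. by rewrite vaddC vadd0. Qed.

Lemma vaddACA x y z w : vadd (vadd x y) (vadd z w) = vadd (vadd x z) (vadd y w).
Proof. by rewrite -!vaddA (vaddA _ y) (vaddC _ y) -vaddA. Qed.

Lemma vaddK x y : vadd (vadd x y) (vopp y) = x.
Proof. by rewrite -vaddA vaddN vadd0. Qed.

Lemma vaddIr z x y : vadd x z = vadd y z -> x = y.
Proof. by move=> E; rewrite -(vadd0 _ x) -(vaddN _ z) vaddA E -vaddA vaddN vadd0. Qed.

Lemma vscal0l x : vscal 0 x = vzero.
Proof.
apply: (vaddIr (vscal 0 x)).
by rewrite vadd0l -vscalDl Rplus_0_l.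
Qed.

Lemma vscal0r (a : R) : vscal a (@vzero V) = vzero.
Proof. by rewrite -(vscal0l vzero) vscalA Rmult_0_r. Qed.

Lemma voppE x : vopp x = vscal (-1) x.
Proof.
apply: (vaddIr x).
by rewrite vaddC vaddN -{2}(vscal1 _ x) -vscalDl Rplus_opp_l vscal0l.
Qed.

Lemma vsub_scal x1 x2 t1 t2 z : vadd x1 (vscal t1 z) = vadd x2 (vscal t2 z) ->
  vadd x1 (vscal (-1) x2) = vscal (t2 - t1) z.
Proof.
move=> E; rewrite -[x1](vaddK x1 (vscal t1 z)) E voppE vscalA -(vaddA _ x2) -vscalDl.
rewrite vaddC vaddA -{2}(vscal1 _ x2) -vscalDl Rplus_opp_l vscal0l vadd0l.
by f_equal; ring.
Qed.

Lemma vadd_scal_factor s x y : s <> 0 -> vadd x (vscal s y) = vscal s (vadd (vscal (/ s) x) y).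
Proof. by move=> s0; rewrite vscalDr vscalA Rinv_r // vscal1. Qed.

Lemma vsub_eq0 x y : vadd x (vopp y) = vzero -> x = y.
Proof. by move=> E; apply: (vaddIr (vopp y)); rewrite E vaddN. Qed.

Record linear_functional (f : V -> R) : Prop := {
  lfD : forall x y, f (vadd x y) = f x + f y;
  lfZ : forall a x, f (vscal a x) = a * f x }.

Lemma lfN f x : linear_functional f -> f (vopp x) = - f x.
Proof. by case=> _ fZ; rewrite voppE fZ; ring. Qed.

End VectorAlgebra.
Arguments lfD {V f}. Arguments lfZ {V f}.

Section Gauge.
Variables (V : VecSpace) (nu : V -> R).
Hypothesis nu_gauge : is_gauge V nu.

Lemma gauge_ge0 x : 0 <= nu x.
Proof. by case: nu_gauge. Qed.

Lemma gauge_subadd x y : nu (vadd x y) <= nu x + nu y.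
Proof. by case: nu_gauge => _ []. Qed.

Lemma gauge_homo t x : 0 < t -> nu (vscal t x) = t * nu x.
Proof. by case: nu_gauge => _ [] _; apply. Qed.

Lemma gauge0 : nu vzero = 0.
Proof. by have := gauge_homo 2 vzero; rewrite vscal0r; lra. Qed.

(* Partial linear functionals dominated by [nu] are encoded by their graphs;
   the domain of a graph is left implicit. *)
Record dominated_graph (G : V * R -> Prop) : Prop := {
  graph_functional : forall x a b, G (x, a) -> G (x, b) -> a = b;
  graph_add : forall x y a b, G (x, a) -> G (y, b) -> G (vadd x y, a + b);
  graph_scal : forall t x a, G (x, a) -> G (vscal t x, t * a);
  graph_le : forall x a, G (x, a) -> a <= nu x }.
Arguments graph_functional {G} _ {x a b}. Arguments graph_add {G} _ {x y a b}.
Arguments graph_scal {G} _ t {x a}. Arguments graph_le {G} _ {x a}.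

Definition graph_ext (G : V * R -> Prop) (z : V) (c : R) : V * R -> Prop :=
  fun p => exists y a t, G (y, a) /\ p = (vadd y (vscal t z), a + t * c).

Lemma graph_ext_sub G z c p : G p -> graph_ext G z c p.
Proof.
case: p => y a Gp; exists y, a, 0; split => //.
by rewrite vscal0l vadd0 Rmult_0_l Rplus_0_r.
Qed.

Lemma graph_ext_point G z c : G (vzero, 0) -> graph_ext G z c (z, c).
Proof.
by move=> G0; exists vzero, 0, 1; rewrite vscal1 vadd0l Rmult_1_l Rplus_0_l.
Qed.

Lemma graph_ext_functional G z c x a b : dominated_graph G -> (forall a, ~ G (z, a)) ->
  graph_ext G z c (x, a) -> graph_ext G z c (x, b) -> a = b.
Proof.
move=> DG zG [y1 [a1 [t1 [G1 [-> ->]]]]] [y2 [a2 [t2 [G2 [E ->]]]]].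
have [t12 | t12] := Req_dec t1 t2.
  subst t2; rewrite -(vaddIr _ _ _ E) in G2.
  by rewrite (graph_functional DG G1 G2).
exfalso; apply: (zG ((a1 + -1 * a2) / (t2 - t1))).
have -> : z = vscal (/ (t2 - t1)) (vadd y1 (vscal (-1) y2)).
  by rewrite (vsub_scal _ _ _ _ _ E) vscalA Rinv_l ?vscal1 //; lra.
rewrite /Rdiv (Rmult_comm (_ + _)).
exact/(graph_scal DG)/(graph_add DG G1)/(graph_scal DG).
Qed.

Definition admissible_value (G : V * R -> Prop) (z : V) (c : R) : Prop :=
  forall y a, G (y, a) -> a - nu (vadd y (vopp z)) <= c /\ c <= nu (vadd y z) - a.

Lemma graph_ext_le G z c x b : dominated_graph G -> admissible_value G z c ->
  graph_ext G z c (x, b) -> b <= nu x.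
Proof.
move=> DG adm [y [a [t [Gy [-> ->]]]]].
have [tneg | [-> | tpos]] := Rtotal_order t 0.
- have /adm [hc _] := graph_scal DG (/ - t) Gy.
  have E : vscal t z = vscal (- t) (vopp z).
    by rewrite voppE vscalA; f_equal; ring.
  rewrite E vadd_scal_factor ?gauge_homo; try lra.
  have := Rmult_le_compat_l (- t) _ _ (ltac:(lra)) hc.
  have -> : - t * (/ - t * a - nu (vadd (vscal (/ - t) y) (vopp z))) =
            a - - t * nu (vadd (vscal (/ - t) y) (vopp z)) by field; lra.
  lra.
- by rewrite vscal0l vadd0 Rmult_0_l Rplus_0_r; apply: (graph_le DG).
- have /adm [_ hc] := graph_scal DG (/ t) Gy.
  rewrite vadd_scal_factor ?gauge_homo; try lra.
  have := Rmult_le_compat_l t _ _ (ltac:(lra)) hc.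
  have -> : t * (nu (vadd (vscal (/ t) y) z) - / t * a) =
            t * nu (vadd (vscal (/ t) y) z) - a by field; lra.
  lra.
Qed.

Lemma graph_ext_dominated G z c : dominated_graph G -> (forall a, ~ G (z, a)) ->
  admissible_value G z c -> dominated_graph (graph_ext G z c).
Proof.
move=> DG zG adm; split.
- by move=> x a b; apply: graph_ext_functional.
- move=> x1 x2 b1 b2 [y1 [a1 [t1 [G1 [-> ->]]]]] [y2 [a2 [t2 [G2 [-> ->]]]]].
  exists (vadd y1 y2), (a1 + a2), (t1 + t2); split; first exact: (graph_add DG).
  by rewrite vaddACA -vscalDl; f_equal; ring.
- move=> s x b [y [a [t [Gy [-> ->]]]]].
  exists (vscal s y), (s * a), (s * t); split; first exact: (graph_scal DG).
  by rewrite vscalDr vscalA; f_equal; ring.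
- by move=> x b; apply: graph_ext_le.
Qed.

Lemma admissible_value_exists G z : dominated_graph G -> G (vzero, 0) ->
  exists c, admissible_value G z c.
Proof.
move=> DG G0.
(* a1 + a2 <= nu (y1 + y2) <= nu (y1 - z) + nu (y2 + z) *)
have sep y1 a1 y2 a2 : G (y1, a1) -> G (y2, a2) ->
    a1 - nu (vadd y1 (vopp z)) <= nu (vadd y2 z) - a2.
  move=> G1 G2; have := graph_le DG (graph_add DG G1 G2).
  have := gauge_subadd (vadd y1 (vopp z)) (vadd y2 z).
  by rewrite vaddACA (vaddC _ (vopp z)) vaddN vadd0; lra.
pose E r := exists y a, G (y, a) /\ r = a - nu (vadd y (vopp z)).
have E_bound : bound E.
  by exists (nu (vadd vzero z) - 0) => r [y [a [Gy ->]]]; apply: sep.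
have E_inhabited : exists r, E r by exists (0 - nu (vadd vzero (vopp z))), vzero, 0.
have [c [c_ub c_lub]] := completeness E E_bound E_inhabited.
exists c => y a Gy; split; first by apply: c_ub; exists y, a.
by apply: c_lub => r [y' [a' [Gy' ->]]]; apply: sep.
Qed.

Local Open Scope classical_set_scope.

Lemma dominated_graph_chain (F : set (V * R -> Prop)) :
  F `<=` dominated_graph -> total_on F subset -> dominated_graph (\bigcup_(X in F) X).
Proof.
move=> FD Ftot.
have common X1 X2 p1 p2 : F X1 -> F X2 -> X1 p1 -> X2 p2 ->
    exists2 X, F X & X p1 /\ X p2.
  move=> F1 F2 X1p X2p; case: (Ftot _ _ F1 F2) => S.
  - by exists X2 => //; split => //; apply: S.
  - by exists X1 => //; split => //; apply: S.
split.
- move=> x a b [X1 F1 X1a] [X2 F2 X2b].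
  have [X FX [Xa Xb]] := common _ _ _ _ F1 F2 X1a X2b.
  exact: (graph_functional (FD _ FX) Xa Xb).
- move=> x y a b [X1 F1 X1a] [X2 F2 X2b].
  have [X FX [Xa Xb]] := common _ _ _ _ F1 F2 X1a X2b.
  by exists X => //; apply: (graph_add (FD _ FX)).
- by move=> t x a [X FX Xa]; exists X => //; apply: (graph_scal (FD _ FX)).
- by move=> x a [X FX Xa]; apply: (graph_le (FD _ FX) Xa).
Qed.

Lemma dominated_graph_extension G0 : dominated_graph G0 -> G0 (vzero, 0) ->
  exists f, linear_functional f /\ (forall x, f x <= nu x) /\
            (forall x a, G0 (x, a) -> f x = a).
Proof.
move=> DG0 G00.
(* The guard makes the empty union of a chain admissible for Zorn's lemma. *)
pose P G := dominated_graph G /\ (G !=set0 -> G0 `<=` G).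
have chainP F : F `<=` P -> total_on F subset -> P (\bigcup_(X in F) X).
  move=> FP Ftot; split; first by apply: dominated_graph_chain => // X /FP [].
  case=> p [X FX Xp] q /(proj2 (FP _ FX) (ex_intro _ p Xp)) Xq.
  by exists X.
have [A [[DA A_G0] A_max]] := Zorn_bigcup chainP.
have G0A : G0 `<=` A.
  apply: A_G0; apply: NNPP => A0; apply: (A_max G0); last by split => // _ ?.
  split; last by move=> /(_ _ G00) A00; apply: A0; exists (vzero, 0).
  by move=> p Ap; exfalso; apply: A0; exists p.
have A_total z : exists a, A (z, a).
  apply: NNPP => zA.
  have [c adm] := admissible_value_exists _ z DA (G0A _ G00).
  apply: (A_max (graph_ext A z c)); last split.
  - split; first by move=> p; apply: graph_ext_sub.
    by move=> /(_ _ (graph_ext_point A z c (G0A _ G00))) Azc; apply: zA; exists c.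
  - by apply: graph_ext_dominated => // a Aza; apply: zA; exists a.
  - by move=> _ p /G0A; apply: graph_ext_sub.
pose f z := proj1_sig (cid (A_total z)).
have Af z : A (z, f z) := proj2_sig (cid (A_total z)).
exists f; split; [split|split].
- by move=> x y; apply: (graph_functional DA (Af _) (graph_add DA (Af x) (Af y))).
- by move=> t x; apply: (graph_functional DA (Af _) (graph_scal DA t (Af x))).
- by move=> x; apply: (graph_le DA (Af x)).
- by move=> x a /G0A; apply: (graph_functional DA (Af x)).
Qed.

Lemma zero_graph_dominated : dominated_graph [set (vzero, 0)].
Proof.
split.
- by move=> x a b [_ ->] [_ ->].
- by move=> x y a b [-> ->] [-> ->]; rewrite vadd0 Rplus_0_r.
- by move=> t x a [-> ->]; rewrite vscal0r Rmult_0_r.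
- by move=> x a [-> ->]; rewrite gauge0; lra.
Qed.

Lemma hahn_banach x0 :
  exists f, linear_functional f /\ (forall x, f x <= nu x) /\ f x0 = nu x0.
Proof.
have [-> | x0_neq0] := pselect (x0 = vzero).
  have [f [lf [f_le _]]] := dominated_graph_extension _ zero_graph_dominated erefl.
  by exists f; split => //; split => //; rewrite gauge0 -(vscal0l vzero) (lfZ lf); ring.
have D : dominated_graph (graph_ext [set (vzero, 0)] x0 (nu x0)).
  apply: (graph_ext_dominated _ _ _ zero_graph_dominated); first by move=> a [].
  move=> y a [-> ->]; rewrite !vadd0l.
  by have := gauge_ge0 (vopp x0); have := gauge_ge0 x0; lra.
have [f [lf [f_le f_ext]]] := dominated_graph_extension _ D (graph_ext_sub _ _ _ _ erefl).
by exists f; split => //; split => //; apply/f_ext/graph_ext_point.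
Qed.

End Gauge.

Lemma mem_In (T : eqType) (x : T) (s : seq T) : x \in s -> List.In x s.
Proof. by elim: s => //= a s IH; rewrite in_cons => /orP [/eqP ->|/IH]; [left|right]. Qed.

Lemma continuous_fun_lipschitz_comp (X : TopSpace) (f : X -> R) (g : R -> R) :
  continuous_fun X f -> (forall u v, Rabs (g u - g v) <= Rabs (u - v)) ->
  continuous_fun X (fun t => g (f t)).
Proof.
move=> f_cont g_lip x eps eps_gt0.
have [U [oU [Ux U_near]]] := f_cont x eps eps_gt0.
exists U; do 2 split => //.
by move=> y /U_near; apply: Rle_lt_trans.
Qed.

Local Open Scope classical_set_scope.

Section Subspace.
Variables (T : ptopologicalType) (P : T -> Prop).

Definition subspace_open (U : {x : T | P x} -> Prop) : Prop :=
  exists W : set T, open W /\ forall x, U x <-> W (proj1_sig x).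

Lemma subspace_open_full : subspace_open (fun _ => True).
Proof. by exists setT; split; [exact: openT|]. Qed.

Lemma subspace_open_union (I : Type) (U : I -> {x : T | P x} -> Prop) :
  (forall i, subspace_open (U i)) -> subspace_open (fun x => exists i, U i x).
Proof.
move=> /(_ _) /cid-/all_sig[W /all_and2[oW UW]].
exists (\bigcup_(i in setT) W i); split; first by apply: bigcup_open => i _.
move=> x; split=> [[i /UW Wi]|[i _ /UW Ui]]; last by exists i.
by exists i.
Qed.

Lemma subspace_open_inter U W : subspace_open U -> subspace_open W ->
  subspace_open (fun x => U x /\ W x).
Proof.
move=> [U' [oU UU']] [W' [oW WW']]; exists (U' `&` W'); split; first exact: openI.
by move=> x; rewrite UU' WW'.
Qed.

Definition subspace : TopSpace :=
  Build_TopSpace {x : T | P x} subspace_open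
    subspace_open_full subspace_open_union subspace_open_inter.

Lemma subspace_compact : compact [set x | P x] -> compact_space subspace.
Proof.
rewrite compact_cover => Pcompact I U oU U_cover.
have /(_ _) /cid-/all_sig[W /all_and2[oW UW]] := oU.
have [D _ D_cover] : finite_subset_cover [set: {classic I}] W [set x | P x].
  apply: Pcompact => [i _|t Pt]; first exact: oW.
  have [i /UW Wi] := U_cover (exist _ t Pt); by exists i.
exists (enum_fset D) => x; have [i iD /UW Ui] := D_cover _ (proj2_sig x).
by exists i; split; first exact: (@mem_In {classic I}).
Qed.

Lemma subspace_hausdorff : hausdorff_space T -> hausdorff subspace.
Proof.
rewrite open_hausdorff => T_sep x y xy.
have /eqP : proj1_sig x <> proj1_sig y.
  by move=> E; apply: xy; apply: (eq_sig_hprop _ _ _ E) => t; apply: Prop_irrelevance.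
move=> /T_sep [[A B] /= [xA yB] [oA oB /eqP AB0]].
exists (fun z => A (proj1_sig z)), (fun z => B (proj1_sig z)).
do 4?split; [by exists A|by exists B|by rewrite -in_setE|by rewrite -in_setE|].
by move=> z ABz; have : (A `&` B) (proj1_sig z) by []; rewrite AB0.
Qed.

Lemma subspace_continuous (f : T -> R) :
  continuous f -> continuous_fun subspace (fun x => f (proj1_sig x)).
Proof.
move=> f_cont x eps eps_gt0; set c := f (proj1_sig x).
pose I := [set r : R | Order.lt (c - eps) r] `&` [set r : R | Order.lt r (c + eps)].
exists (fun y => I (f (proj1_sig y))); split; [|split].
- exists (f @^-1` I); split => //; apply: open_comp => [t _|]; first exact: f_cont.
  by apply: openI; [exact: open_gt|exact: open_lt].
- by split; apply/RltP; rewrite /c; lra.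
- by move=> y [/RltP h1 /RltP h2]; apply: Rabs_def1; lra.
Qed.

End Subspace.

(* [compact_cover] is stated for pointed spaces; the point is irrelevant. *)
HB.instance Definition _ (T : Type) :=
  isPointed.Build {ptws {classic T} -> R} (fun _ => 0).

Lemma closed_eq_continuous (T : topologicalType) (F G : T -> R) :
  continuous F -> continuous G -> closed [set t | F t = G t].
Proof.
move=> F_cont G_cont.
have -> : [set t | F t = G t] = (fun t => (F t - G t)%R) @^-1` [set 0].
  by apply/seteqP; split=> t /= E; [rewrite E GRing.subrr|apply: GRing.subr0_eq].
apply: preimage_closed => [t _|]; last exact: closed_eq.
exact: (@continuousB _ R^o T F G t (F_cont t) (G_cont t)).
Qed.

Section DualBall.
Variables (V : VecSpace) (nu : V -> R).
Hypothesis nu_gauge : is_gauge V nu.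

Definition dominated (f : {ptws {classic V} -> R}) : Prop :=
  linear_functional f /\ forall x, f x <= nu x.

Lemma dominated_bound f x : dominated f -> - nu (vopp x) <= f x <= nu x.
Proof. by move=> [lf f_le]; have := f_le (vopp x); rewrite (lfN _ _ lf); have := f_le x; lra. Qed.

Lemma dominated_closed : closed [set f | dominated f].
Proof.
have eval_cont x : continuous (fun f : {ptws {classic V} -> R} => f x).
  exact: proj_continuous.
have -> : [set f | dominated f] =
    \bigcap_(p in [set: V * V]) [set f | f (vadd p.1 p.2) = (f p.1 + f p.2)%R] `&`
    \bigcap_(q in [set: R * V]) [set f | f (vscal q.1 q.2) = (q.1 * f q.2)%R] `&`
    \bigcap_(x in [set: V]) [set f | Order.le (f x) (nu x)].
  apply/seteqP; split=> f.
  - move=> [[fD fZ] f_le]; split; [split|] => [[x y] _|[a x] _|x _] /=.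
    + exact: fD.
    + exact: fZ.
    + exact/RleP/f_le.
  - move=> [[fD fZ] f_le]; split; [split|] => [x y|a x|x].
    + exact: (fD (x, y)).
    + exact: (fZ (a, x)).
    + exact/RleP/(f_le x).
apply: closedI; [apply: closedI|]; apply: closed_bigI => i _.
- apply: closed_eq_continuous => [|f]; first exact: eval_cont.
  exact: (@continuousD _ R^o _ _ _ f (eval_cont _ f) (eval_cont _ f)).
- (* Plain [exact]: the two neighbourhood structures on [R] in play agree only
     up to unfolding, which [exact:] does not attempt. *)
  apply: closed_eq_continuous => [|f]; first exact: eval_cont.
  exact (@continuousM _ _ (fun=> i.1) _ f (@cst_continuous _ _ i.1 f) (eval_cont i.2 f)).
- exact (preimage_closed (fun f _ => eval_cont i f) (@closed_le _ (nu i))).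
Qed.

Lemma dominated_compact : compact [set f | dominated f].
Proof.
pose I (x : {classic V}) : set R := `[- nu (vopp x), nu x]%classic.
apply: (subclosed_compact dominated_closed (tychonoff (A := I) _)).
  by move=> x; apply: segment_compact.
move=> f /(dominated_bound f) f_bound x.
by rewrite /I /= in_itv /=; have [? ?] := f_bound x; apply/andP; split; apply/RleP.
Qed.

Definition dual_ball : TopSpace := subspace {ptws {classic V} -> R} dominated.

Definition evaluation (x : V) (h : dual_ball) : R := proj1_sig h x.

Lemma dual_ball_compact : compact_space dual_ball.
Proof. exact/subspace_compact/dominated_compact. Qed.

Lemma dual_ball_hausdorff : hausdorff dual_ball.
Proof. by apply/subspace_hausdorff/hausdorff_product => _; apply: Rhausdorff. Qed.

Lemma evaluation_continuous x : continuous_fun dual_ball (evaluation x).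
Proof.
exact (subspace_continuous _ _ (fun f : {ptws {classic V} -> R} => f x)
  (@proj_continuous _ _ (x : {classic V}))).
Qed.

Lemma evaluation_linear : is_linear V dual_ball evaluation.
Proof.
by split=> [x y|a x] h; have [lf _] := proj2_sig h; rewrite /evaluation ?(lfD lf) ?(lfZ lf).
Qed.

Lemma evaluation_opp x h : evaluation (vopp x) h = - evaluation x h.
Proof. by have [lf _] := proj2_sig h; apply: lfN. Qed.

Lemma evaluation_bound x h : - nu (vopp x) <= evaluation x h <= nu x.
Proof. exact/dominated_bound/(proj2_sig h). Qed.

Lemma evaluation_attains x : exists h, evaluation x h = nu x.
Proof.
have [f [lf [f_le fx]]] := hahn_banach V nu nu_gauge x.
by exists (exist _ f (conj lf f_le)).
Qed.

End DualBall.

Lemma is_supnorm_ub {X : TopSpace} {f : X -> R} {r} t : is_supnorm X f r -> Rabs (f t) <= r.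
Proof. by move=> [r_ub _]; apply: r_ub; right; exists t. Qed.

Lemma is_supnorm_attained (X : TopSpace) (f : X -> R) r :
  (forall t, Rabs (f t) <= r) -> (exists t, Rabs (f t) = r) -> is_supnorm X f r.
Proof.
move=> f_le [t0 ft0]; split=> [y [-> | [t ->]] // | b b_ub].
  by rewrite -ft0; apply: Rabs_pos.
by rewrite -ft0; apply: b_ub; right; exists t0.
Qed.

Lemma is_glb_attained (E : R -> Prop) m : E m -> (forall y, E y -> m <= y) -> is_glb E m.
Proof. by move=> Em m_lb; split=> // b; apply. Qed.

Lemma Rmax0_opp_lipschitz u v : Rabs (Rmax 0 (- u) - Rmax 0 (- v)) <= Rabs (u - v).
Proof. by rewrite /Rmax /Rabs; do 2?case: Rle_dec; do 2?case: Rcase_abs; lra. Qed.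

Section Evaluation.
Variables (V : VecSpace) (nu : V -> R).
Hypothesis nu_gauge : is_gauge V nu.

Local Notation ev := (evaluation V nu).

Lemma evaluation_supnorm x : is_supnorm (dual_ball V nu) (ev x) (gauge_norm V nu x).
Proof.
rewrite /gauge_norm /conj_gauge.
apply: is_supnorm_attained => [h | ].
  have := evaluation_bound V nu x h.
  have := Rmax_l (nu x) (nu (vopp x)); have := Rmax_r (nu x) (nu (vopp x)).
  by rewrite /Rabs; case: Rcase_abs; lra.
have [le_opp | lt_opp] := Rle_dec (nu (vopp x)) (nu x).
- have [h hx] := evaluation_attains V nu nu_gauge x.
  by exists h; rewrite hx Rmax_left // Rabs_pos_eq //; apply: gauge_ge0.
- have [h hx] := evaluation_attains V nu nu_gauge (vopp x).
  exists h; rewrite Rmax_right; last lra.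
  by rewrite -Rabs_Ropp -evaluation_opp hx Rabs_pos_eq //; apply: gauge_ge0.
Qed.

(* The infimum is attained at the positive part [max (ev x) 0] of [ev x]. *)
Lemma evaluation_dC x : is_dC (dual_ball V nu) (ev x) (nu x).
Proof.
have [h0 h0x] := evaluation_attains V nu nu_gauge x.
have nux_ge0 := gauge_ge0 V nu nu_gauge x.
apply: is_glb_attained => [|r [p [_ [p_ge0 /(is_supnorm_ub h0)]]]]; last first.
  by rewrite h0x; have := p_ge0 h0; have := Rle_abs (nu x + p h0); lra.
exists (fun h => Rmax 0 (- ev x h)); split; [|split].
- apply: continuous_fun_lipschitz_comp Rmax0_opp_lipschitz.
  exact: evaluation_continuous.
- by move=> h; apply: Rmax_l.
- apply: is_supnorm_attained => [h|]; last first.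
    by exists h0; rewrite h0x /Rmax /Rabs; case: Rle_dec; case: Rcase_abs; lra.
  have := evaluation_bound V nu x h; rewrite /Rmax /Rabs.
  by case: Rle_dec; case: Rcase_abs; lra.
Qed.

Lemma evaluation_ge0 x : (forall h, 0 <= ev x h) <-> gauge_cone V nu x.
Proof.
rewrite /gauge_cone /conj_gauge; split=> [ev_ge0 | nu_opp0 h].
- have [h hx] := evaluation_attains V nu nu_gauge (vopp x).
  have := ev_ge0 h; have := gauge_ge0 V nu nu_gauge (vopp x).
  by rewrite -hx evaluation_opp; lra.
- by have := evaluation_bound V nu x h; lra.
Qed.

Lemma evaluation_injective : is_proper_gauge V nu -> injective ev.
Proof.
move=> [_ nu_proper] x y exy; apply: NNPP => x_neq_y.
have xy : vadd x (vopp y) <> vzero by move/vsub_eq0.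
have ev0 h : ev (vadd x (vopp y)) h = 0.
  by rewrite (proj1 (evaluation_linear V nu)) evaluation_opp exy; ring.
have [h hx] := evaluation_attains V nu nu_gauge (vadd x (vopp y)).
have [h' hx'] := evaluation_attains V nu nu_gauge (vopp (vadd x (vopp y))).
case: (nu_proper _ xy); rewrite /conj_gauge.
- by rewrite -hx ev0.
- by rewrite -hx' evaluation_opp ev0 Ropp_0.
Qed.

End Evaluation.

Theorem theorem2p13 (V : VecSpace) (nu : V -> R) (Hnu : is_proper_gauge V nu) :
  exists X : TopSpace, compact_space X /\ hausdorff X /\
  exists phi : V -> X -> R,
    (forall x, continuous_fun X (phi x)) /\
    is_linear V X phi /\
    (forall x, is_dC X (phi x) (nu x)) /\
    (forall x, is_supnorm X (phi x) (gauge_norm V nu x)) /\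
    (forall x y, phi x = phi y -> x = y) /\
    (forall x, (forall t, 0 <= phi x t) <-> gauge_cone V nu x).
Proof.
have nu_gauge := proj1 Hnu.
exists (dual_ball V nu); split; first exact: dual_ball_compact.
split; first exact: dual_ball_hausdorff.
exists (evaluation V nu); split; [|split; [|split; [|split; [|split]]]].
- exact: evaluation_continuous.
- exact: evaluation_linear.
- exact: evaluation_dC.
- exact: evaluation_supnorm.
- exact: evaluation_injective.
- exact: evaluation_ge0.
Qed.
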